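(* Let $W$ be a finite-dimensional irreducible $H'_n(m)$-module and $\alpha,\beta\in\mathbb C^n$. Then $(\pi_{\alpha,\beta},L(W))$ is an irreducible $A_n(m)\rtimes H_n(m)$-module.
   Context: $n=2k$, $\bar\Gamma=m_1\mathbb Z\oplus\dots\oplus m_n\mathbb Z$, $A_n(m)=\mathbb C[t_1^{\pm m_1},\dots,t_n^{\pm m_n}]$ with monomials $t^r$, $r\in\bar\Gamma$. $(\cdot,\cdot)$ is the standard bilinear form on $\mathbb C^n$, $\bar r=(r_{k+1},\dots,r_{2k},-r_1,\dots,-r_k)$, $d_i=t_i\partial_{t_i}$, $D(u,r)=\sum_iu_it^rd_i$. $H_n(m)=\mathrm{span}\{d_i,\ h_r=D(\bar r,r): r\in\bar\Gamma\}$, a Lie algebra of derivations of $A_n(m)$, and $A_n(m)\rtimes H_n(m)$ is the semidirect product with $A_n(m)$ abelian and $[D(u,r),t^s]=(u,s)t^{r+s}$. $I(\bar r,r)=D(\bar r,r)-D(\bar r,0)$ and $H'_n(m)=\mathrm{span}\{I(\bar r,r):r\in\bar\Gamma\}$, a Lie subalgebra of $H_n(m)$. For an $H'_n(m)$-module $W$ and $\alpha,\beta\in\mathbb C^n$, $L(W)=W\otimes A_n(m)$ with action $D(\bar r,r)(w\otimes t^s)=(I(\bar r,r)w)\otimes t^{r+s}+(\bar r,\beta+s)w\otimes t^{r+s}$ ($0\ne r$), $D(u,0)(w\otimes t^s)=(u,\alpha+s)w\otimes t^s$, $t^r(w\otimes t^s)=w\otimes t^{r+s}$; this module is denoted $(\pi_{\alpha,\beta},L(W))$.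 *)

From HB Require Import structures.
From mathcomp Require Import all_boot all_order all_algebra.
From mathcomp Require Import complex.
From mathcomp Require Import reals.
Set Implicit Arguments. Unset Strict Implicit. Unset Printing Implicit Defensive.
Import Order.TTheory GRing.Theory Num.Theory.
Local Open Scope ring_scope.

Section Defs.
Variable C : fieldType.
Variable k : nat.
Local Notation n := (k + k)%N.
Local Notation Zn := 'rV[int]_n.
Local Notation Cn := 'rV[C]_n.

Definition rbar (r : Zn) : Zn := row_mx (rsubmx r) (- lsubmx r).
Definition toC (r : Zn) : Cn := map_mx (fun z : int => z%:~R) r.
Definition form (u v : Cn) : C := \sum_(i < n) u ord0 i * v ord0 i.
Definition inGamma (m : 'I_n -> nat) (r : Zn) : Prop :=
  forall i, ((m i)%:Z %| r ord0 i)%Z.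

Variable W : vectType C.

(* A representation of H'_n(m) on W, given by the images rho r of the basis
   elements I(rbar,r) (r in barGamma, r <> 0; I(0bar,0) = 0). *)
Definition Hprime_module (m : 'I_n -> nat) (rho : Zn -> 'End(W)) : Prop :=
  (forall w, rho 0 w = 0) /\
  forall r s, inGamma m r -> inGamma m s -> forall w,
    rho r (rho s w) - rho s (rho r w)
    = form (toC (rbar r)) (toC s) *: (rho (r + s) w - rho r w - rho s w).

Definition Hprime_irreducible (m : 'I_n -> nat) (rho : Zn -> 'End(W)) : Prop :=
  Hprime_module m rho /\ (0 < \dim (fullv : {vspace W}))%N /\
  forall U : {vspace W},
    (forall r, inGamma m r -> forall w, w \in U -> rho r w \in U) ->
    U = 0%VS \/ U = fullv.

(* L(W) = W (x) A_n(m) = finitely supported functions barGamma -> W;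
   f corresponds to sum_s f(s) (x) t^s *)
Definition LW (m : 'I_n -> nat) (f : Zn -> W) : Prop :=
  (exists s : seq Zn, forall x, f x != 0 -> x \in s) /\
  (forall x, f x != 0 -> inGamma m x).

Definition act_t (r : Zn) (f : Zn -> W) : Zn -> W := fun x => f (x - r).
Definition act_D0 (alpha : Cn) (u : Cn) (f : Zn -> W) : Zn -> W :=
  fun x => form u (alpha + toC x) *: f x.
(* h_r = D(rbar,r) *)
Definition act_h (rho : Zn -> 'End(W)) (beta : Cn) (r : Zn) (f : Zn -> W)
  : Zn -> W :=
  fun x => rho r (f (x - r)) + form (toC (rbar r)) (beta + toC (x - r)) *: f (x - r).

Definition ops_linear (m : 'I_n -> nat) (X : (Zn -> W) -> (Zn -> W)) : Prop :=
  (forall f, LW m f -> LW m (X f)) /\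
  (forall f g, LW m f -> LW m g -> forall x, X (fun y => f y + g y) x = X f x + X g x) /\
  (forall c f, LW m f -> forall x, X (fun y => c *: f y) x = c *: X f x).

(* (pi_{alpha,beta}, L(W)) is a module of the Lie algebra A_n(m) x| H_n(m),
   described on the spanning set t^r, D(u,0), h_r (r in barGamma). *)
Definition AH_module (m : 'I_n -> nat) (alpha beta : Cn) (rho : Zn -> 'End(W)) : Prop :=
  (forall r, inGamma m r -> ops_linear m (act_t r)) /\
  (forall u, ops_linear m (act_D0 alpha u)) /\
  (forall r, inGamma m r -> ops_linear m (act_h rho beta r)) /\
  (forall u v f x, act_D0 alpha (u + v) f x = act_D0 alpha u f x + act_D0 alpha v f x) /\
  (forall c u f x, act_D0 alpha (c *: u) f x = c *: act_D0 alpha u f x) /\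
  (forall f, LW m f -> forall x, act_h rho beta 0 f x = 0) /\
  (forall r s f, inGamma m r -> inGamma m s -> LW m f -> forall x,
     act_t r (act_t s f) x - act_t s (act_t r f) x = 0) /\
  (forall u s f, inGamma m s -> LW m f -> forall x,
     act_D0 alpha u (act_t s f) x - act_t s (act_D0 alpha u f) x
     = form u (toC s) *: act_t s f x) /\
  (forall r s f, inGamma m r -> inGamma m s -> LW m f -> forall x,
     act_h rho beta r (act_t s f) x - act_t s (act_h rho beta r f) x
     = form (toC (rbar r)) (toC s) *: act_t (r + s) f x) /\
  (forall u v f, LW m f -> forall x,
     act_D0 alpha u (act_D0 alpha v f) x - act_D0 alpha v (act_D0 alpha u f) x = 0) /\
  (forall u s f, inGamma m s -> LW m f -> forall x,
     act_D0 alpha u (act_h rho beta s f) x - act_h rho beta s (act_D0 alpha u f) x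
     = form u (toC s) *: act_h rho beta s f x) /\
  (forall r s f, inGamma m r -> inGamma m s -> LW m f -> forall x,
     act_h rho beta r (act_h rho beta s f) x - act_h rho beta s (act_h rho beta r f) x
     = form (toC (rbar r)) (toC s) *: act_h rho beta (r + s) f x).

Definition LW_submodule (m : 'I_n -> nat) (alpha beta : Cn) (rho : Zn -> 'End(W))
  (S : (Zn -> W) -> Prop) : Prop :=
  (forall f, S f -> LW m f) /\
  S (fun _ => 0) /\
  (forall f g, S f -> S g -> S (fun x => f x + g x)) /\
  (forall c f, S f -> S (fun x => c *: f x)) /\
  (forall r f, inGamma m r -> S f -> S (act_t r f)) /\
  (forall u f, S f -> S (act_D0 alpha u f)) /\
  (forall r f, inGamma m r -> S f -> S (act_h rho beta r f)).

Definition LW_irreducible (m : 'I_n -> nat) (alpha beta : Cn) (rho : Zn -> 'End(W))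
  : Prop :=
  AH_module m alpha beta rho /\
  (exists f, LW m f /\ exists x, f x != 0) /\
  forall S, LW_submodule m alpha beta rho S ->
    (forall f, S f -> forall x, f x = 0) \/ (forall f, LW m f -> S f).

End Defs.

(* The proof has three parts.
   1. Module structure: t^r, D(u,0) and h_r preserve L(W), are linear and
      satisfy the brackets of A_n(m) x| H_n(m).  Everything reduces to how the
      weights (u, v + x) shift under translation of x, except [h_r, h_s], which
      also uses the H'_n(m)-relation of rho and the fact that (rbar r, s) is an
      alternating form.
   2. Weight separation: D(e_i,0) acts on w (x) t^z by alpha_i + z_i; in
      characteristic 0 these weights separate the points of barGamma, so a
      nonzero submodule contains a nonzero element supported at one point,
      and (translating by some t^-x) a nonzero element of W (x) t^0.
   3. Generation: for a submodule S, the w with w (x) t^0 in S form a subspace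
      of W stable under every rho r (because t^-r h_r acts on W (x) t^0 as
      rho r plus a scalar); by part 2 and irreducibility it is all of W, and
      the translates t^y (W (x) t^0) = W (x) t^y span L(W).
   The argument works over any ordered field (numFieldType) and does not use
   the positivity of the m_i. *)

From Pilot Require Import Defs.
From HB Require Import structures.
From mathcomp Require Import all_boot all_order all_algebra.
From mathcomp Require Import complex.
From mathcomp Require Import reals.
From mathcomp Require Import boolp ring.
Import GRing.Theory Num.Theory.
Local Open Scope ring_scope.

Set Implicit Arguments.
Unset Strict Implicit.
Unset Printing Implicit Defensive.

Section FormAlgebra.
Variables (C : fieldType) (k : nat).
Local Notation n := (k + k)%N.
Local Notation Zn := 'rV[int]_n.
Local Notation Cn := 'rV[C]_n.
Local Notation form := (@Defs.form C k).
Local Notation toC := (@Defs.toC C k).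

Lemma toCD (a b : Zn) : toC (a + b) = toC a + toC b.
Proof. by apply/rowP => i; rewrite !mxE intrD. Qed.

Lemma toCN (a : Zn) : toC (- a) = - toC a.
Proof. by apply/rowP => i; rewrite !mxE intrN. Qed.

Lemma toCB (a b : Zn) : toC (a - b) = toC a - toC b.
Proof. by rewrite toCD toCN. Qed.

Lemma toC0 : toC 0 = 0.
Proof. by apply/rowP => i; rewrite !mxE. Qed.

Lemma rbarD (a b : Zn) : rbar (a + b) = rbar a + rbar b.
Proof. by rewrite /rbar linearD /= linearD /= opprD add_row_mx. Qed.

Lemma rbar0 : rbar (0 : Zn) = 0.
Proof. by rewrite /rbar linear0 /= linear0 oppr0 row_mx0. Qed.

Lemma formDl (u v w : Cn) : form (u + v) w = form u w + form v w.
Proof. by rewrite /Defs.form -big_split; apply: eq_bigr => i _; rewrite mxE mulrDl. Qed.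

Lemma formZl c (u w : Cn) : form (c *: u) w = c * form u w.
Proof. by rewrite /Defs.form mulr_sumr; apply: eq_bigr => i _; rewrite mxE mulrA. Qed.

Lemma form0l (w : Cn) : form 0 w = 0.
Proof. by rewrite -(scale0r 0) formZl mul0r. Qed.

Lemma formDr (u v w : Cn) : form u (v + w) = form u v + form u w.
Proof. by rewrite /Defs.form -big_split; apply: eq_bigr => i _; rewrite mxE mulrDr. Qed.

Lemma formNr (u v : Cn) : form u (- v) = - form u v.
Proof. by rewrite /Defs.form -sumrN; apply: eq_bigr => i _; rewrite mxE mulrN. Qed.

Lemma form_delta (i : 'I_n) (v : Cn) : form (delta_mx 0 i) v = v 0 i.
Proof.
rewrite /Defs.form (bigD1 i) //= big1 ?addr0; first by rewrite mxE !eqxx mul1r.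
by move=> j /negbTE ji; rewrite mxE ji andbF mul0r.
Qed.

Lemma toCE (a : Zn) i : toC a 0 i = (a 0 i)%:~R.
Proof. by rewrite mxE. Qed.

Lemma rbarEl (a : Zn) (i : 'I_k) : rbar a 0 (lshift k i) = a 0 (rshift k i).
Proof. by rewrite /rbar row_mxEl mxE. Qed.

Lemma rbarEr (a : Zn) (i : 'I_k) : rbar a 0 (rshift k i) = - a 0 (lshift k i).
Proof. by rewrite /rbar row_mxEr !mxE. Qed.

Lemma form_rbar_split (r s : Zn) :
  form (toC (rbar r)) (toC s)
  = \sum_(i < k) (r 0 (rshift k i))%:~R * (s 0 (lshift k i))%:~R
  - \sum_(i < k) (r 0 (lshift k i))%:~R * (s 0 (rshift k i))%:~R.
Proof.
rewrite /Defs.form big_split_ord /= -sumrN.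
by congr (_ + _); apply: eq_bigr => i _;
  rewrite !toCE ?rbarEl ?rbarEr ?intrN ?mulNr.
Qed.

Lemma form_rbar_anti (r s : Zn) :
  form (toC (rbar r)) (toC s) = - form (toC (rbar s)) (toC r).
Proof.
rewrite !form_rbar_split opprB; congr (_ - _); apply: eq_bigr => i _; exact: mulrC.
Qed.

Lemma form_rbar_self (r : Zn) : form (toC (rbar r)) (toC r) = 0.
Proof.
by rewrite form_rbar_split (eq_bigr _ (fun i _ => mulrC _ _)) subrr.
Qed.

End FormAlgebra.

(* The identity behind the bracket [h_r, h_s] = (rbar r, s) h_{r+s}: after
   expanding both products, the four kinds of terms (rho rho, rho, rho, scalar)
   each contribute a multiple of q = (rbar r, s). *)
Lemma commutator_expand (R : comNzRingType) (V : lmodType R)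
    (a b a' b' q e : R) (P Q X Y Z g : V) :
  P - Q = q *: (Z - X - Y) -> b - a' = q -> a - b' = q -> a * b - a' * b' = q * e ->
  (P + b *: X + (a *: Y + (a * b) *: g)) - (Q + b' *: Y + (a' *: X + (a' * b') *: g))
  = q *: Z + (q * e) *: g.
Proof.
move=> hPQ hb ha hab.
rewrite [Q + _ + _]addrACA opprD addrACA !opprD (addrACA P) (addrACA (a *: Y)).
rewrite -!scalerBl hPQ hb ha hab.
by rewrite !scalerBr (addrAC _ (- _)) subrK addrA subrK.
Qed.

Section ModuleStructure.
Variables (C : fieldType) (k : nat) (W : vectType C).
Local Notation n := (k + k)%N.
Local Notation Zn := 'rV[int]_n.
Local Notation Cn := 'rV[C]_n.
Local Notation form := (@Defs.form C k).
Local Notation toC := (@Defs.toC C k).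
Variables (m : 'I_n -> nat) (rho : Zn -> 'End(W)) (alpha beta : Cn).

Lemma inGamma0 : inGamma m 0.
Proof. by move=> i; rewrite mxE; apply: rpred0. Qed.

Lemma inGammaD a b : inGamma m a -> inGamma m b -> inGamma m (a + b).
Proof. by move=> ha hb i; rewrite mxE; apply: rpredD. Qed.

Lemma inGammaN a : inGamma m a -> inGamma m (- a).
Proof. by move=> ha i; rewrite mxE dvdzE abszN -dvdzE. Qed.

Lemma LW_shift (f g : Zn -> W) r : inGamma m r -> LW m f ->
  (forall x, g x != 0 -> f (x - r) != 0) -> LW m g.
Proof.
move=> hr [[s hs] hf] hg; split.
  exists (map (fun y => y + r) s) => x /hg /hs hx.
  by apply/mapP; exists (x - r) => //; rewrite subrK.
by move=> x /hg /hf hx; rewrite -(subrK r x); apply: inGammaD.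
Qed.

Lemma act_t_linear r : inGamma m r -> ops_linear m (@act_t C k W r).
Proof. by move=> hr; split=> // f hf; apply: (LW_shift hr hf). Qed.

Lemma act_D0_linear u : ops_linear m (@act_D0 C k W alpha u).
Proof.
split; last split.
- move=> f hf; apply: (LW_shift inGamma0 hf) => x; rewrite subr0 /act_D0.
  by apply: contra => /eqP ->; rewrite scaler0.
- by move=> f g _ _ x; rewrite /act_D0 scalerDr.
- by move=> c f _ x; rewrite /act_D0 scalerA mulrC -scalerA.
Qed.

Lemma act_h_linear r : inGamma m r -> ops_linear m (act_h rho beta r).
Proof.
move=> hr; split; last split.
- move=> f hf; apply: (LW_shift hr hf) => x; rewrite /act_h.
  by apply: contra => /eqP ->; rewrite linear0 scaler0 addr0.
- by move=> f g _ _ x; rewrite /act_h linearD scalerDr addrACA.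
- by move=> c f _ x; rewrite /act_h linearZ scalerDr scalerA mulrC -scalerA.
Qed.

(* Translating the point x by -s changes the affine weight (u, v + x) by
   -(u, s); every bracket below reduces to this. *)
Lemma form_shift (u v : Cn) (x s : Zn) :
  form u (v + toC (x - s)) = form u (v + toC x) - form u (toC s).
Proof. by rewrite toCB addrA [LHS]formDr formNr. Qed.

Lemma bracket_t_t (r s : Zn) (f : Zn -> W) (x : Zn) :
  act_t r (act_t s f) x - act_t s (act_t r f) x = 0.
Proof. by rewrite /act_t addrAC subrr. Qed.

Lemma bracket_D0_t (u : Cn) (s : Zn) (f : Zn -> W) (x : Zn) :
  act_D0 alpha u (act_t s f) x - act_t s (act_D0 alpha u f) x
  = form u (toC s) *: act_t s f x.
Proof. by rewrite /act_D0 /act_t -scalerBl form_shift opprB addrC subrK. Qed.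

Lemma bracket_D0_D0 (u v : Cn) (f : Zn -> W) (x : Zn) :
  act_D0 alpha u (act_D0 alpha v f) x - act_D0 alpha v (act_D0 alpha u f) x = 0.
Proof. by rewrite /act_D0 !scalerA mulrC subrr. Qed.

Lemma bracket_h_t (r s : Zn) (f : Zn -> W) (x : Zn) :
  act_h rho beta r (act_t s f) x - act_t s (act_h rho beta r f) x
  = form (toC (rbar r)) (toC s) *: act_t (r + s) f x.
Proof.
rewrite /act_h /act_t [x - s - r]addrAC [- (r + s)]opprD addrA opprD.
rewrite addrACA subrr add0r -scalerBl.
by rewrite !form_shift; congr (_ *: _); ring.
Qed.

Lemma bracket_D0_h (u : Cn) (s : Zn) (f : Zn -> W) (x : Zn) :
  act_D0 alpha u (act_h rho beta s f) x - act_h rho beta s (act_D0 alpha u f) x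
  = form u (toC s) *: act_h rho beta s f x.
Proof.
rewrite /act_D0 /act_h linearZ /= scalerA mulrC -scalerA -scalerDr -scalerBl.
by rewrite form_shift opprB addrC subrK.
Qed.

Hypothesis rho_module : Hprime_module m rho.

Lemma act_h0 (f : Zn -> W) (x : Zn) : act_h rho beta 0 f x = 0.
Proof.
by rewrite /act_h rbar0 toC0 form0l scale0r addr0 (proj1 rho_module).
Qed.

(* [h_r, h_s] = (rbar r, s) h_{r+s}: the relation of H'_n(m) satisfied by rho
   supplies the rho-rho terms, the alternating form the remaining ones. *)
Lemma bracket_h_h (r s : Zn) (f : Zn -> W) (x : Zn) : inGamma m r -> inGamma m s ->
  act_h rho beta r (act_h rho beta s f) x - act_h rho beta s (act_h rho beta r f) x
  = form (toC (rbar r)) (toC s) *: act_h rho beta (r + s) f x.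
Proof.
move=> hr hs; rewrite /act_h [x - s - r]addrAC [- (r + s)]opprD addrA.
rewrite ![rho _ (_ + _)]linearD /= [rho r (_ *: _)]linearZ [rho s (_ *: _)]linearZ /=.
rewrite !scalerDr !scalerA.
apply: commutator_expand; first exact: (proj2 rho_module).
- by rewrite !form_shift form_rbar_self (form_rbar_anti _ s r); ring.
- by rewrite !form_shift form_rbar_self; ring.
- rewrite !form_shift rbarD toCD !formDl form_rbar_self.
  by rewrite (form_rbar_anti _ s r); ring.
Qed.

Lemma AH_module_of_Hprime : AH_module m alpha beta rho.
Proof.
split; first exact: act_t_linear.
split; first exact: act_D0_linear.
split; first exact: act_h_linear.
split; first by move=> u v f x; rewrite /act_D0 formDl scalerDl.
split; first by move=> c u f x; rewrite /act_D0 formZl scalerA.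
split; first by move=> f _ x; apply: act_h0.
split; first by move=> r s f _ _ _ x; apply: bracket_t_t.
split; first by move=> u s f _ _ x; apply: bracket_D0_t.
split; first by move=> r s f _ _ _ x; apply: bracket_h_t.
split; first by move=> u v f _ x; apply: bracket_D0_D0.
split; first by move=> u s f _ _ x; apply: bracket_D0_h.
by move=> r s f hr hs _ x; apply: bracket_h_h.
Qed.

End ModuleStructure.

(* On a finite-dimensional space, a predicate closed under linear combinations
   is the membership predicate of a subspace: take a subspace of maximal
   dimension on which the predicate holds. *)
Lemma subspace_of_pred (K : fieldType) (V : vectType K) (P : V -> Prop) :
  P 0 -> (forall a b, P a -> P b -> P (a + b)) -> (forall c a, P a -> P (c *: a)) ->
  exists U : {vspace V}, forall v, v \in U <-> P v.
Proof.
move=> P0 PD PZ; pose inP (U : {vspace V}) := forall v, v \in U -> P v.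
have inP_add U v : inP U -> P v -> inP (U + <[v]>)%VS.
  move=> hU Pv w /memv_addP [a aU [b /vlineP [c ->] ->]].
  by apply: PD; [apply: hU | apply: PZ].
pose has_dim d := `[< exists U, inP U /\ \dim U = d >].
have has_dim0 : has_dim 0%N.
  apply/asboolP; exists 0%VS; split; last exact: dimv0.
  by move=> v; rewrite memv0 => /eqP ->.
have dim_bound d : has_dim d -> (d <= \dim (fullv : {vspace V}))%N.
  by move/asboolP => [U [_ <-]]; apply/dimvS/subvf.
have [d /asboolP [U [hU dU]] dmax] := ex_maxnP (ex_intro _ 0%N has_dim0) dim_bound.
exists U => v; split; first exact: hU.
move=> Pv; have dimUv : (\dim (U + <[v]>) <= \dim U)%N.
  by rewrite dU; apply/dmax/asboolP; exists (U + <[v]>)%VS; split=> //; apply: inP_add.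
move: dimUv; rewrite (geq_leqif (dimv_leqif_sup (addvSl U <[v]>))) subv_add.
by case/andP.
Qed.

Section Irreducibility.
Variables (C : numFieldType) (k : nat) (W : vectType C).
Local Notation n := (k + k)%N.
Local Notation Zn := 'rV[int]_n.
Local Notation Cn := 'rV[C]_n.
Local Notation form := (@Defs.form C k).
Local Notation toC := (@Defs.toC C k).
Variables (m : 'I_n -> nat) (rho : Zn -> 'End(W)) (alpha beta : Cn).

(* The pure tensor w (x) t^y of L(W). *)
Definition single (y : Zn) (w : W) : Zn -> W := fun x => if x == y then w else 0.

Lemma single_LW y w : inGamma m y -> LW m (single y w).
Proof.
move=> hy; split.
  by exists [:: y] => x; rewrite /single inE; case: (x =P y); rewrite ?eqxx.
by move=> x; rewrite /single; case: (x =P y) => [-> | _] //; rewrite eqxx.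
Qed.

Lemma single_shift y w : single y w = act_t y (single 0 w).
Proof. by apply: funext => x; rewrite /act_t /single subr_eq0. Qed.

Lemma LW_single_ind (P : (Zn -> W) -> Prop) :
  P (fun _ => 0) -> (forall f g, P f -> P g -> P (fun x => f x + g x)) ->
  (forall y w, inGamma m y -> P (single y w)) -> forall f, LW m f -> P f.
Proof.
move=> P0 PD Psingle f [[s supp_s] suppG].
elim: s f supp_s suppG => [|y s IH] f supp suppG.
  suff -> : f = (fun _ => 0) by [].
  by apply: funext => x; case: (eqVneq (f x) 0) => // /supp.
pose f' x := if x == y then 0 else f x.
have f'P : P f'.
  apply: IH => x; rewrite /f'; case: (x =P y) => [_ | /eqP xy fx]; rewrite ?eqxx //.
    by move: (supp x fx); rewrite inE (negbTE xy).
  exact: suppG.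
case: (eqVneq (f y) 0) => [fy0 | fy].
  suff -> : f = f' by [].
  by apply: funext => x; rewrite /f'; case: (x =P y) => [-> |].
have -> : f = (fun x => single y (f y) x + f' x).
  apply: funext => x; rewrite /single /f'.
  by case: (x =P y) => [-> | _]; rewrite ?addr0 ?add0r.
by apply: PD => //; apply/Psingle/suppG.
Qed.

Variable S : (Zn -> W) -> Prop.
Hypothesis S_submodule : LW_submodule m alpha beta rho S.

Lemma sub_LW f : S f -> LW m f.
Proof. by case: S_submodule => SLW _; apply: SLW. Qed.
Lemma sub0 : S (fun _ => 0).
Proof. by case: S_submodule => _ []. Qed.
Lemma subD f g : S f -> S g -> S (fun x => f x + g x).
Proof. by case: S_submodule => _ [_ [SD _]]; apply: SD. Qed.
Lemma subZ c f : S f -> S (fun x => c *: f x).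
Proof. by case: S_submodule => _ [_ [_ [SZ _]]]; apply: SZ. Qed.
Lemma sub_t r f : inGamma m r -> S f -> S (act_t r f).
Proof. by case: S_submodule => _ [_ [_ [_ [St _]]]]; apply: St. Qed.
Lemma sub_D0 u f : S f -> S (act_D0 alpha u f).
Proof. by case: S_submodule => _ [_ [_ [_ [_ [SD0 _]]]]]; apply: SD0. Qed.
Lemma sub_h r f : inGamma m r -> S f -> S (act_h rho beta r f).
Proof. by case: S_submodule => _ [_ [_ [_ [_ [_ Sh]]]]]; apply: Sh. Qed.

(* Part 2, one step: D(e_i,0) acts on w (x) t^z by alpha_i + z_i, and in
   characteristic 0 these weights separate the points of barGamma; so a
   submodule can multiply f pointwise by a weight vanishing at y but not at
   x. *)
Lemma sub_separate f x y : S f -> y != x ->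
  exists2 c : Zn -> C, (c x != 0) && (c y == 0) & S (fun z => c z *: f z).
Proof.
move=> Sf yx; have [i xyi] : exists i, x 0 i != y 0 i.
  apply/existsP; apply: contraR yx => /existsPn same.
  by apply/eqP/rowP => j; apply/esym/eqP; rewrite -[_ == _]negbK same.
pose u : Cn := delta_mx 0 i.
exists (fun z : Zn => (z 0 i)%:~R - (y 0 i)%:~R).
  by rewrite subr_eq0 eqr_int xyi subrr eqxx.
have -> : (fun z : Zn => ((z 0 i)%:~R - (y 0 i)%:~R) *: f z)
        = (fun z => act_D0 alpha u f z + (- form u (alpha + toC y)) *: f z).
  apply: funext => z; rewrite /act_D0 !form_delta !mxE scaleNr -scalerBl.
  by congr (_ *: _); rewrite opprD addrACA subrr add0r.
by apply: subD; [apply: sub_D0 | apply: subZ].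
Qed.

(* Part 2: a submodule element that is nonzero at x can be cut down, by
   separating x from the other points of its support one at a time, to a
   nonzero element supported at x alone. *)
Lemma sub_isolate f x : S f -> f x != 0 ->
  exists g, [/\ S g, g x != 0 & forall y, y != x -> g y = 0].
Proof.
move=> Sf fx; have [[s supp] _] := sub_LW Sf.
have {}supp : forall z, f z != 0 -> z != x -> z \in s by move=> z /supp.
elim: s f Sf fx supp => [|y s IH] f Sf fx supp.
  by exists f; split=> // z zx; case: (eqVneq (f z) 0) => // /supp /(_ zx).
case: (eqVneq y x) => [yx | yx].
  apply: (IH f) => // z fz zx; move: (supp z fz zx).
  by rewrite inE yx (negbTE zx).
have [c /andP [cx /eqP cy] Sg] := sub_separate Sf yx.
apply: IH Sg _ _; first by rewrite scaler_eq0 negb_or cx.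
move=> z; rewrite scaler_eq0 negb_or => /andP [cz fz] zx.
move: (supp z fz zx); rewrite inE => /orP [/eqP zy |] //.
by rewrite zy cy eqxx in cz.
Qed.

Definition fibre0 (w : W) : Prop := S (single 0 w).

Lemma fibre0_0 : fibre0 0.
Proof.
rewrite /fibre0 (_ : single 0 0 = fun _ => 0); first exact: sub0.
by apply: funext => x; rewrite /single; case: ifP.
Qed.

Lemma fibre0_add a b : fibre0 a -> fibre0 b -> fibre0 (a + b).
Proof.
rewrite /fibre0 (_ : single 0 (a + b) = fun x => single 0 a x + single 0 b x).
  exact: subD.
by apply: funext => x; rewrite /single; case: ifP; rewrite ?addr0.
Qed.

Lemma fibre0_scale c a : fibre0 a -> fibre0 (c *: a).
Proof.
rewrite /fibre0 (_ : single 0 (c *: a) = fun x => c *: single 0 a x).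
  exact: subZ.
by apply: funext => x; rewrite /single; case: ifP; rewrite ?scaler0.
Qed.

(* ... stable under H'_n(m): on W (x) t^0 the operator
   t^-r h_r - (rbar r, beta) acts as rho r. *)
Lemma fibre0_rho r w : inGamma m r -> fibre0 w -> fibre0 (rho r w).
Proof.
move=> hr Sw; rewrite /fibre0; pose c := form (toC (rbar r)) (beta + toC 0).
have -> : single 0 (rho r w)
    = (fun x => act_t (- r) (act_h rho beta r (single 0 w)) x + (- c) *: single 0 w x).
  apply: funext => x; rewrite /act_t /act_h /single opprK addrK.
  case: (x =P 0) => [-> | _]; first by rewrite /c scaleNr addrK.
  by rewrite linear0 !scaler0 !addr0.
apply: subD; last exact: subZ.
by apply: sub_t; [apply: inGammaN | apply: sub_h].
Qed.

(* A nonzero submodule has a nonzero fibre at t^0: isolate a point x of the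
   support and translate it to 0. *)
Lemma fibre0_nonzero f x : S f -> f x != 0 -> exists2 w, w != 0 & fibre0 w.
Proof.
move=> Sf fx; have [g [Sg gx gx0]] := sub_isolate Sf fx.
exists (g x) => //; rewrite /fibre0.
have xG : inGamma m x by have [_] := sub_LW Sg; apply.
have -> : single 0 (g x) = act_t (- x) g; last by apply: sub_t; [apply: inGammaN|].
apply: funext => z; rewrite /act_t /single opprK.
case: (z =P 0) => [-> | /eqP z0]; first by rewrite add0r.
by rewrite gx0 // -subr_eq0 addrK.
Qed.

(* Part 3: by irreducibility of W the fibre is all of W, and translating
   W (x) t^0 by the t^y produces every pure tensor. *)
Lemma sub_full : Hprime_irreducible m rho -> (exists f x, S f /\ f x != 0) ->
  forall f, LW m f -> S f.
Proof.
move=> [_ [_ W_irr]] [f0 [x0 [Sf0 f0x0]]].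
have [U memU] := subspace_of_pred fibre0_0 fibre0_add fibre0_scale.
have U_stable r : inGamma m r -> forall w, w \in U -> rho r w \in U.
  by move=> hr w /memU Sw; apply/memU/fibre0_rho.
have [w w0 Sw] := fibre0_nonzero Sf0 f0x0.
have U_full : U = fullv.
  case: (W_irr U U_stable) => // U0.
  by move/memU: Sw; rewrite U0 memv0 (negbTE w0).
apply: LW_single_ind; [exact: sub0 | exact: subD |] => y v hy.
by rewrite single_shift; apply: sub_t hy _; apply/memU; rewrite U_full memvf.
Qed.

End Irreducibility.

Lemma LW_irreducible_of_Hprime (C : numFieldType) (k : nat) (W : vectType C)
    (m : 'I_(k + k) -> nat) (rho : 'rV[int]_(k + k) -> 'End(W))
    (alpha beta : 'rV[C]_(k + k)) :
  Hprime_irreducible m rho -> LW_irreducible m alpha beta rho.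
Proof.
move=> Wirr; have [rho_mod [dimW _]] := Wirr.
split; first exact: AH_module_of_Hprime _ _ rho_mod.
split.
  exists (single 0 (vpick fullv)); split; first exact/single_LW/inGamma0.
  by exists 0; rewrite /single eqxx vpick0 -dimv_eq0 -lt0n.
move=> S S_sub; case: (pselect (exists f x, S f /\ f x != 0)) => [nz | zero].
  by right; apply: sub_full S_sub Wirr nz.
left=> f Sf x; case: (eqVneq (f x) 0) => // fx.
by case: zero; exists f, x.
Qed.

Unset Implicit Arguments.
Set Strict Implicit.

Theorem lemma6p2 (R : realType) (k : nat) (m : 'I_(k + k) -> nat)
  (W : vectType R[i]) (rho : 'rV[int]_(k + k) -> 'End(W))
  (alpha beta : 'rV[R[i]]_(k + k)) :
  (forall i, (0 < m i)%N) ->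
  Hprime_irreducible m rho ->
  LW_irreducible m alpha beta rho.
Proof. by move=> _; apply: LW_irreducible_of_Hprime. Qed.
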